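(* Let $T$ be a complete first-order theory and $\pi(\bar x)$ a partial type over $\emptyset$ (with $\bar x$ a possibly infinite tuple of variables). Let $M$ and $M'$ be two $\aleph_0$-saturated and strongly $\aleph_0$-homogeneous models of $T$. If there is an $\mathrm{Aut}(M)$-invariant regular Borel probability measure on $S_\pi(M)=\{q\in S_{\bar x}(M):\pi\subseteq q\}$, then there is an $\mathrm{Aut}(M')$-invariant regular Borel probability measure on $S_\pi(M')$. In particular, amenability of $\pi$ does not depend on the choice of the monster model, and $\pi$ is amenable if and only if there is an $\mathrm{Aut}(M)$-invariant regular Borel probability measure on $S_\pi(M)$ for some (equivalently, any) $\aleph_0$-saturated and strongly $\aleph_0$-homogeneous model $M$.
   Context: A model $N$ is strongly $\aleph_0$-homogeneous if every partial elementary map between finite subsets of $N$ extends to an automorphism of $N$. $\mathrm{Aut}(N)$ acts on $S_\pi(N)$ by $\varphi(\bar x,\sigma(\bar b))\in\sigma q$ iff $\varphi(\bar x,\bar b)\in q$. A partial type $\pi(\bar x)$ over $\emptyset$ is amenable if there is an $\mathrm{Aut}(\mathfrak C)$-invariant regular Borel probability measure on $S_\pi(\mathfrak C)$, where $\mathfrak C$ is a monster model of $T$ ($\kappa$-saturated and strongly $\kappa$-homogeneous for a large $\kappa$). *)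

From Stdlib Require Import Reals List.
From Stdlib Require Fin.
Open Scope R_scope.

Record signature := {
  fsym : Type; farity : fsym -> nat;
  rsym : Type; rarity : rsym -> nat }.

Section FO.
Variable S : signature.

Inductive term (V : Type) : Type :=
  | TVar : V -> term V
  | TApp : forall f : fsym S, (Fin.t (farity S f) -> term V) -> term V.

(* formulas with free variables in V; FEx binds the variable None *)
Inductive formula (V : Type) : Type :=
  | FEq : term V -> term V -> formula V
  | FRel : forall r : rsym S, (Fin.t (rarity S r) -> term V) -> formula V
  | FNot : formula V -> formula V
  | FAnd : formula V -> formula V -> formula V
  | FEx : formula (option V) -> formula V.

Arguments TVar {V}. Arguments TApp {V}.
Arguments FEq {V}. Arguments FRel {V}. Arguments FNot {V}.
Arguments FAnd {V}. Arguments FEx {V}.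

Definition sentence := formula Empty_set.

Fixpoint tmap {V W : Type} (h : V -> W) (t : term V) : term W :=
  match t with
  | TVar v => TVar (h v)
  | TApp f args => TApp f (fun i => tmap h (args i))
  end.

Definition omap {V W : Type} (h : V -> W) (o : option V) : option W :=
  match o with Some v => Some (h v) | None => None end.

Fixpoint fmap {V W : Type} (h : V -> W) (phi : formula V) : formula W :=
  match phi with
  | FEq t u => FEq (tmap h t) (tmap h u)
  | FRel r args => FRel r (fun i => tmap h (args i))
  | FNot p => FNot (fmap h p)
  | FAnd p q => FAnd (fmap h p) (fmap h q)
  | FEx p => FEx (fmap (omap h) p)
  end.

Record structure := {
  carrier :> Type;
  carrier_inh : inhabited carrier;
  funs : forall f : fsym S, (Fin.t (farity S f) -> carrier) -> carrier;
  rels : forall r : rsym S, (Fin.t (rarity S r) -> carrier) -> Prop }.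

Fixpoint teval (M : structure) {V : Type} (e : V -> M) (t : term V) : M :=
  match t with
  | TVar v => e v
  | TApp f args => funs M f (fun i => teval M e (args i))
  end.

Definition ext {M : Type} {V : Type} (e : V -> M) (m : M) (o : option V) : M :=
  match o with Some v => e v | None => m end.

Fixpoint sat (M : structure) {V : Type} (e : V -> M) (phi : formula V) : Prop :=
  match phi with
  | FEq t u => teval M e t = teval M e u
  | FRel r args => rels M r (fun i => teval M e (args i))
  | FNot p => ~ sat M e p
  | FAnd p q => sat M e p /\ sat M e q
  | FEx p => exists m : M, sat M (ext e m) p
  end.

Definition no_var {M : Type} (v : Empty_set) : M := match v with end.

Definition models (M : structure) (T : sentence -> Prop) : Prop :=
  forall s, T s -> sat M no_var s.

Definition complete_theory (T : sentence -> Prop) : Prop :=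
  (exists M : structure, models M T) /\
  forall s : sentence,
    (forall M : structure, models M T -> sat M no_var s) \/
    (forall M : structure, models M T -> sat M no_var (FNot s)).

Definition partial_type (T : sentence -> Prop) (I : Type)
  (pi : formula I -> Prop) : Prop :=
  forall l : list (formula I), (forall phi, In phi l -> pi phi) ->
    exists (N : structure) (a : I -> N),
      models N T /\ forall phi, In phi l -> sat N a phi.

(* formulas phi(x, b) with parameters b from M live in formula (I + M);
   a parameter is interpreted as itself *)
Definition penv {I : Type} (M : structure) (a : I -> M) (v : I + M) : M :=
  match v with inl i => a i | inr m => m end.

Definition complete_type (I : Type) (M : structure)
  (q : formula (I + M) -> Prop) : Prop :=
  (forall l : list (formula (I + M)), (forall phi, In phi l -> q phi) ->
     exists a : I -> M, forall phi, In phi l -> sat M (penv M a) phi) /\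
  (forall phi, q phi \/ q (FNot phi)).

Definition Spi (I : Type) (pi : formula I -> Prop) (M : structure) : Type :=
  { q : formula (I + M) -> Prop |
    complete_type I M q /\ forall phi, pi phi -> q (fmap inl phi) }.

Section Space.
Variables (I : Type) (pi : formula I -> Prop) (M : structure).
Let X := Spi I pi M.

Definition sopen (U : X -> Prop) : Prop :=
  forall q : X, U q -> exists phi : formula (I + M),
    proj1_sig q phi /\ forall q' : X, proj1_sig q' phi -> U q'.

Definition scompact (K : X -> Prop) : Prop :=
  forall (J : Type) (U : J -> X -> Prop), (forall j, sopen (U j)) ->
    (forall q, K q -> exists j, U j q) ->
    exists l : list J, forall q, K q -> exists j, In j l /\ U j q.

Definition borel (B : X -> Prop) : Prop :=
  forall C : (X -> Prop) -> Prop,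
    (forall U, sopen U -> C U) ->
    (forall A, C A -> C (fun q => ~ A q)) ->
    (forall A : nat -> X -> Prop, (forall n, C (A n)) ->
       C (fun q => exists n, A n q)) ->
    C B.

Definition regular_borel_prob (mu : (X -> Prop) -> R) : Prop :=
  (forall B, borel B -> 0 <= mu B) /\
  mu (fun _ => True) = 1 /\
  (forall B : nat -> X -> Prop, (forall n, borel (B n)) ->
     (forall n m q, n <> m -> B n q -> B m q -> False) ->
     infinite_sum (fun n => mu (B n)) (mu (fun q => exists n, B n q))) /\
  (forall B, borel B -> forall eps, 0 < eps ->
     (exists K, scompact K /\ (forall q, K q -> B q) /\ mu B - eps < mu K) /\
     (exists U, sopen U /\ (forall q, B q -> U q) /\ mu U < mu B + eps)).

End Space.

Definition automorphism (M : structure) (s : M -> M) : Prop :=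
  (forall x y, s x = s y -> x = y) /\ (forall y, exists x, s x = y) /\
  (forall f args, s (funs M f args) = funs M f (fun i => s (args i))) /\
  (forall r args, rels M r args <-> rels M r (fun i => s (args i))).

Definition pmap {I : Type} {M : Type} (s : M -> M) (v : I + M) : I + M :=
  match v with inl i => inl i | inr m => inr (s m) end.

(* mu is Aut(M)-invariant for the action
   phi(x, s b) in s q  iff  phi(x, b) in q *)
Definition aut_invariant (I : Type) (pi : formula I -> Prop) (M : structure)
  (mu : (Spi I pi M -> Prop) -> R) : Prop :=
  forall s : M -> M, automorphism M s ->
  forall B : Spi I pi M -> Prop, borel I pi M B ->
    mu (fun q => exists q' : Spi I pi M, B q' /\
          forall phi : formula (I + M),
            proj1_sig q' (fmap (pmap s) phi) <-> proj1_sig q phi) = mu B.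

Definition aleph0_saturated (M : structure) : Prop :=
  forall (n : nat) (b : Fin.t n -> M) (p : formula (option (Fin.t n)) -> Prop),
    (forall l, (forall phi, In phi l -> p phi) ->
       exists m : M, forall phi, In phi l -> sat M (ext b m) phi) ->
    exists m : M, forall phi, p phi -> sat M (ext b m) phi.

Definition strongly_aleph0_homogeneous (M : structure) : Prop :=
  forall (n : nat) (a b : Fin.t n -> M),
    (forall phi : formula (Fin.t n), sat M a phi <-> sat M b phi) ->
    exists s : M -> M, automorphism M s /\ forall i, s (a i) = b i.

End FO.

(* Finite partial elementary maps from M' to M exist and can be extended, forth and back, to
   any finite set, by completeness of T and aleph_0-saturation of M and M'. A formula
   phi(x, b') over M' is sent, by moving its parameters b' along such a map, to a formula over
   M, and the clopen set [phi] of S_pi(M') receives the mu-measure of the corresponding clopen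
   set of S_pi(M). This does not depend on the map: two choices send b' to tuples with the same
   type over the empty set, which are conjugate under Aut(M) by strong homogeneity, and mu is
   invariant. The resulting function on clopen sets is monotone (a type over M pulls back to a
   type over M' by saturation of M'), finitely additive, and Aut(M')-invariant (an automorphism
   of M' only changes the map). Every finitely additive probability on the clopen sets of a
   Stone space extends to a regular Borel probability measure, clopen sets approximating open
   sets from inside and open sets approximating arbitrary sets from outside, with
   Caratheodory's theorem providing countable additivity; invariance passes to the extension. *)

From Stdlib Require Import Reals Lra Lia List Classical ClassicalEpsilon FunctionalExtensionality PropExtensionality ProofIrrelevance.
From HB Require structures.
From mathcomp Require all_boot all_order all_algebra.
From mathcomp Require boolp classical_sets reals ereal sequences measure_extension Rstruct.
Import ListNotations.
Open Scope R_scope.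

Fixpoint psum (f : nat -> R) (N : nat) : R :=
  match N with O => 0 | S n => psum f n + f n end.

Lemma psum_le_compat f g N : (forall n, f n <= g n) -> psum f N <= psum g N.
Proof. intro H; induction N; simpl; [lra|]. specialize (H N); lra. Qed.

Lemma psum_plus f g N : psum (fun n => f n + g n) N = psum f N + psum g N.
Proof. induction N; simpl; lra. Qed.

Lemma psum_le_incr f N K : (forall n, 0 <= f n) -> (N <= K)%nat -> psum f N <= psum f K.
Proof. intros H HNK; induction HNK; [lra|]. simpl. specialize (H m); lra. Qed.

Lemma psum_halves c N : psum (fun n => c / 2 ^ S n) N + c / 2 ^ N = c.
Proof.
  induction N as [|N IH]; [simpl; field|].
  assert (2 ^ N <> 0) by (apply pow_nonzero; lra).
  assert (c / 2 ^ S N + c / 2 ^ S N = c / 2 ^ N) by (simpl; field; auto).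
  cbn [psum]. lra.
Qed.

Lemma sum_f_R0_psum f n : sum_f_R0 f n = psum f (S n).
Proof. induction n; simpl in *; [lra|]. rewrite IHn; simpl; lra. Qed.

Definition decide (P : Prop) : bool := if excluded_middle_informative P then true else false.

Lemma decide_true P : decide P = true <-> P.
Proof. unfold decide; destruct (excluded_middle_informative P); split; auto; discriminate. Qed.

Module Caratheodory.
Import HB.structures mathcomp.boot.all_boot mathcomp.order.all_order mathcomp.algebra.all_algebra.
Import boolp classical_sets reals ereal sequences measure_extension Rstruct.
Import Order.TTheory GRing.Theory Num.Theory.
Local Open Scope classical_set_scope.

Section OuterMeasure.
Variables (T : Type) (m : (T -> Prop) -> R).
Hypothesis m_set0 : m (fun _ => False) = 0%R.
Hypothesis m_ge0 : forall A, Rle 0 (m A).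
Hypothesis m_mono : forall A B : T -> Prop, (forall x, A x -> B x) -> Rle (m A) (m B).
Hypothesis m_subadditive : forall (F : nat -> T -> Prop) eps, Rlt 0 eps ->
  exists N, Rle (m (fun x => exists n, F n x)) (Rplus (psum (fun i => m (F i)) N) eps).

Definition m_ereal (A : set T) : \bar R := (m A)%:E.

Lemma psum_EFin f N : ((psum f N)%:E = \sum_(0 <= i < N) (f i)%:E)%E.
Proof.
elim: N => [|N IH]; first by rewrite big_geq.
by rewrite big_nat_recr //= -IH -EFinD.
Qed.

Lemma m_ereal0 : m_ereal set0 = 0%E.
Proof. by rewrite /m_ereal /set0 /= m_set0. Qed.

Lemma m_ereal_ge0 A : (0 <= m_ereal A)%E.
Proof. by rewrite /m_ereal lee_fin; apply/RleP. Qed.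

Lemma m_ereal_mono : {homo m_ereal : A B / A `<=` B >-> (A <= B)%E}.
Proof. by move=> A B AB; rewrite /m_ereal lee_fin; apply/RleP; apply: m_mono. Qed.

Lemma m_ereal_sigma_subadditive : sigma_subadditive m_ereal.
Proof.
move=> F; apply/lee_addgt0Pr => e e0.
have [N HN] := m_subadditive F e (RltP e0).
apply: (@le_trans _ _ ((psum (fun i => m (F i)) N)%:E + e%:E)%E).
  rewrite -EFinD /m_ereal lee_fin; apply/RleP.
  by apply: Rle_trans HN; apply: m_mono => x [n _ Fx]; exists n.
rewrite leeD2r // psum_EFin.
by apply: nneseries_lim_ge => n _ _; exact: m_ereal_ge0.
Qed.

HB.instance Definition _ := isOuterMeasure.Build R T m_ereal
  m_ereal0 m_ereal_ge0 m_ereal_mono m_ereal_sigma_subadditive.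

Definition measurable (A : T -> Prop) := caratheodory_measurable m_ereal A.

Lemma measurableP A :
  (forall Y, Rle (Rplus (m (fun x => Y x /\ A x)) (m (fun x => Y x /\ ~ A x))) (m Y)) ->
  measurable A.
Proof.
move=> H; apply: (le_caratheodory_measurable (mu := m_ereal)) => Y.
by rewrite /m_ereal -EFinD lee_fin; apply/RleP; apply: H.
Qed.

Lemma measurable_split A Y : measurable A ->
  m Y = Rplus (m (fun x => Y x /\ A x)) (m (fun x => Y x /\ ~ A x)).
Proof. by move=> /(_ Y); rewrite /m_ereal -EFinD => -[]. Qed.

Lemma measurable_compl A : measurable A -> measurable (fun x => ~ A x).
Proof. exact: caratheodory_measurable_setC. Qed.

Lemma measurable_bigcup (A : nat -> T -> Prop) :
  (forall n, measurable (A n)) -> measurable (fun x => exists n, A n x).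
Proof.
move=> H; have := caratheodory_measurable_bigcup (mu := m_ereal) H.
suff -> : \bigcup_n A n = (fun x => exists n, A n x) by [].
by apply/funext => x; apply/propext; split => [[n _ h]|[n h]]; exists n.
Qed.

End OuterMeasure.
End Caratheodory.

Module Lindenbaum.
Import mathcomp.classical.classical_sets.

Section Lindenbaum.
Variables (Fo Asg : Type) (holds : Asg -> Fo -> Prop) (neg : Fo -> Fo).
Hypothesis holds_neg : forall a p, holds a (neg p) <-> ~ holds a p.

Definition fsat (A : Fo -> Prop) :=
  forall l, (forall p, List.In p l -> A p) -> exists a, forall p, List.In p l -> holds a p.

Lemma fsat_add_iff A c : fsat (fun p => A p \/ p = c) <->
  forall l, (forall p, List.In p l -> A p) ->
    exists a, (forall p, List.In p l -> holds a p) /\ holds a c.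
Proof.
  split.
  - intros H l Hl. destruct (H (c :: l)) as [a Ha].
    + intros p [<-|Hp]; auto.
    + exists a; split; [intros p Hp; apply Ha; right|apply Ha; left]; auto.
  - intros H l Hl.
    destruct (H (List.filter (fun p => decide (A p)) l)) as [a [Ha Hc]].
    + intros p Hp. apply filter_In in Hp. apply decide_true, Hp.
    + exists a. intros p Hp. destruct (Hl p Hp) as [Ap| ->]; auto.
      apply Ha, filter_In. rewrite decide_true; auto.
Qed.

Lemma fsat_sub A B : (forall p, A p -> B p) -> fsat B -> fsat A.
Proof. intros AB HB l Hl; apply HB; auto. Qed.

Lemma fsat_add A p : fsat A -> fsat (fun x => A x \/ x = p) \/ fsat (fun x => A x \/ x = neg p).
Proof.
  intro HA. rewrite !fsat_add_iff. apply NNPP; intros [N1 N2]%not_or_and.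
  apply N1; intros l1 Hl1. apply NNPP; intro U1. apply N2; intros l2 Hl2.
  destruct (HA (l1 ++ l2)) as [a Ha].
  { intros x [Hx|Hx]%in_app_or; auto. }
  destruct (classic (holds a p)) as [Hp|Hp].
  - exfalso; apply U1. exists a; split; auto. intros; apply Ha, in_or_app; auto.
  - exists a; split; [intros; apply Ha, in_or_app; auto|]. apply holds_neg; auto.
Qed.

Lemma fsat_chain_union (Sg : Fo -> Prop) (F : set (set Fo)) :
  fsat Sg -> (forall X, F X -> fsat (fun p => X p \/ Sg p)) -> total_on F subset ->
  fsat (fun p => (exists2 X, F X & X p) \/ Sg p).
Proof.
  intros HS FP Ftot l.
  assert (Hc : (forall p, List.In p l -> (exists2 X, F X & X p) \/ Sg p) ->
    (forall p, List.In p l -> Sg p) \/ exists X, F X /\ forall p, List.In p l -> X p \/ Sg p).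
  { induction l as [|x l IH]; intro H; [left; intros p []|].
    destruct IH as [IH|[X [FX HX]]]; [intros p Hp; apply H; right; auto| |];
      destruct (H x (or_introl eq_refl)) as [[Y FY Yx]|Sx].
    - right; exists Y; split; auto. intros p [<-|Hp]; auto.
    - left; intros p [<-|Hp]; auto.
    - right. destruct (Ftot X Y FX FY) as [XY|YX].
      + exists Y; split; auto. intros p [<-|Hp]; auto. destruct (HX p Hp); auto.
      + exists X; split; auto. intros p [<-|Hp]; auto.
    - right; exists X; split; auto. intros p [<-|Hp]; auto. }
  intro Hl. destruct (Hc Hl) as [H|[X [FX HX]]]; [apply HS|apply (FP X FX)]; auto.
Qed.

Theorem lindenbaum Sg : fsat Sg ->
  exists q, (forall p, Sg p -> q p) /\ fsat q /\ forall p, q p \/ q (neg p).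
Proof.
  intro HS.
  destruct (@Zorn_bigcup Fo (fun A => fsat (fun p => A p \/ Sg p))) as [A [HA Amax]].
  { intros F FP Ftot. apply fsat_chain_union; auto. }
  assert (A_max : forall p, fsat (fun x => (A x \/ Sg x) \/ x = p) -> A p).
  { intros p Hp. apply NNPP; intro nAp.
    apply (Amax (fun x => (A x \/ Sg x) \/ x = p)).
    - split; [intros x Ax; left; left; exact Ax|]. intro E. apply nAp, E. right; reflexivity.
    - refine (fsat_sub _ _ _ Hp). intros x [Bx|Sx]; auto. }
  exists (fun p => A p \/ Sg p). split; [auto|split; [exact HA|]].
  intro p. destruct (fsat_add _ p HA) as [H|H]; [left|right]; left; apply A_max; exact H.
Qed.

End Lindenbaum.
End Lindenbaum.

Definition lub (E : R -> Prop) : R :=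
  match excluded_middle_informative (bound E /\ exists x, E x) with
  | left H => proj1_sig (completeness E (proj1 H) (proj2 H))
  | right _ => 0
  end.

Lemma lub_spec E : bound E -> (exists x, E x) -> is_lub E (lub E).
Proof.
  intros Hb Hne. unfold lub. destruct (excluded_middle_informative _) as [H|H]; [|tauto].
  exact (proj2_sig (completeness E (proj1 H) (proj2 H))).
Qed.

Lemma lub_upper E x : bound E -> E x -> x <= lub E.
Proof. intros Hb Hx. apply (proj1 (lub_spec E Hb (ex_intro _ x Hx))), Hx. Qed.

Lemma lub_least E c : (exists x, E x) -> (forall x, E x -> x <= c) -> lub E <= c.
Proof. intros Hne H. exact (proj2 (lub_spec E (ex_intro _ c H) Hne) c H). Qed.

Lemma lub_approx E eps : bound E -> (exists x, E x) -> 0 < eps ->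
  exists x, E x /\ lub E - eps < x.
Proof.
  intros Hb Hne He. apply NNPP; intro N.
  assert (lub E <= lub E - eps); [|lra].
  apply lub_least; auto. intros x Hx. apply Rnot_lt_le; intro L; apply N; exists x; auto.
Qed.

Lemma list_choice {A B : Type} (P : A -> B -> Prop) (l : list A) :
  (forall a, In a l -> exists b, P a b) -> exists lb, forall a, In a l -> exists b, In b lb /\ P a b.
Proof.
  induction l as [|a l IH]; intro H; [exists nil; intros _ []|].
  destruct IH as [lb Hlb]; [intros; apply H; right; auto|].
  destruct (H a (or_introl eq_refl)) as [b Hb].
  exists (b :: lb). intros x [<-|Hx]; [exists b; split; [left|]; auto|].
  destruct (Hlb x Hx) as [b' [Hb' P']]. exists b'; split; [right|]; auto.
Qed.

(* A Stone space X presented by a Boolean algebra Phi of names of its clopen sets, [mem q p]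
   meaning that the point q lies in the clopen set named p; for X = S_pi(N) and Phi the formulas
   over N, isopen, iscompact and isborel below unfold to sopen, scompact and borel. *)
Section StoneMeasure.
Variables (X Phi : Type) (mem : X -> Phi -> Prop) (neg : Phi -> Phi)
  (conj : Phi -> Phi -> Phi) (top : Phi).
Hypothesis mem_neg : forall q p, mem q (neg p) <-> ~ mem q p.
Hypothesis mem_conj : forall q p r, mem q (conj p r) <-> mem q p /\ mem q r.
Hypothesis mem_top : forall q, mem q top.
Hypothesis stone_compact : forall Sg : Phi -> Prop,
  (forall l, (forall p, In p l -> Sg p) -> exists q, forall p, In p l -> mem q p) ->
  exists q, forall p, Sg p -> mem q p.
Variable lam : Phi -> R.
Hypothesis lam_ge0 : forall p, 0 <= lam p.
Hypothesis lam_top : lam top = 1.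
Hypothesis lam_mono : forall p r, (forall q, mem q p -> mem q r) -> lam p <= lam r.
Hypothesis lam_split : forall p r, lam p = lam (conj p r) + lam (conj p (neg r)).

Definition basic (p : Phi) : X -> Prop := fun q => mem q p.

Definition sub (A B : X -> Prop) := forall q, A q -> B q.

Definition isopen (U : X -> Prop) : Prop :=
  forall q, U q -> exists p, mem q p /\ sub (basic p) U.

Definition iscompact (K : X -> Prop) : Prop :=
  forall (J : Type) (U : J -> X -> Prop), (forall j, isopen (U j)) ->
    (forall q, K q -> exists j, U j q) ->
    exists l : list J, forall q, K q -> exists j, In j l /\ U j q.

Definition isborel (B : X -> Prop) : Prop :=
  forall C : (X -> Prop) -> Prop,
    (forall U, isopen U -> C U) ->
    (forall A, C A -> C (fun q => ~ A q)) ->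
    (forall A : nat -> X -> Prop, (forall n, C (A n)) -> C (fun q => exists n, A n q)) ->
    C B.

Lemma open_basic p : isopen (basic p).
Proof. intros q H; exists p; split; [exact H|intros ? ?; auto]. Qed.

Lemma open_full : isopen (fun _ => True).
Proof. intros q _; exists top; split; [|intros ? ?]; auto. Qed.

Lemma open_inter U V : isopen U -> isopen V -> isopen (fun q => U q /\ V q).
Proof.
  intros HU HV q [Uq Vq]. destruct (HU q Uq) as [p1 [q1 H1]], (HV q Vq) as [p2 [q2 H2]].
  exists (conj p1 p2). rewrite mem_conj. split; auto.
  intros q' H'; unfold basic in H'; rewrite mem_conj in H'. split; [apply H1|apply H2]; apply H'.
Qed.

Lemma open_bigcup {J : Type} (U : J -> X -> Prop) : (forall j, isopen (U j)) ->
  isopen (fun q => exists j, U j q).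
Proof.
  intros HU q [j Hq]. destruct (HU j q Hq) as [p [qp pU]].
  exists p; split; auto. intros q' H; exists j; auto.
Qed.

Lemma lam_ext p r : (forall q, mem q p <-> mem q r) -> lam p = lam r.
Proof. intro H; apply Rle_antisym; apply lam_mono; firstorder. Qed.

Lemma lam_le1 p : lam p <= 1.
Proof. rewrite <- lam_top; apply lam_mono; auto. Qed.

Lemma lam_empty p : (forall q, ~ mem q p) -> lam p = 0.
Proof.
  intro H. pose proof (lam_split p p) as E.
  assert (lam (conj p p) = lam p) by (apply lam_ext; intro q; rewrite mem_conj; tauto).
  assert (lam (conj p (neg p)) = lam p) by (apply lam_ext; intro q; rewrite mem_conj, mem_neg; firstorder).
  lra.
Qed.

Definition bot := neg top.

Lemma mem_bot q : ~ mem q bot.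
Proof. unfold bot; rewrite mem_neg; auto. Qed.

Definition disj p r := neg (conj (neg p) (neg r)).

Lemma mem_disj q p r : mem q (disj p r) <-> mem q p \/ mem q r.
Proof. unfold disj; rewrite mem_neg, mem_conj, !mem_neg; tauto. Qed.

Definition disjl (l : list Phi) : Phi := fold_right disj bot l.

Lemma mem_disjl q l : mem q (disjl l) <-> exists p, In p l /\ mem q p.
Proof.
  induction l as [|p l IH]; simpl; [split; [intro H; destruct (mem_bot q H)|intros [? [[] _]]]|].
  rewrite mem_disj, IH. split; [intros [H|[r [Hr H]]]; eauto|intros [r [[<-|Hr] H]]; eauto].
Qed.

Lemma lam_disj_le p r : lam (disj p r) <= lam p + lam r.
Proof.
  rewrite (lam_split (disj p r) p).
  assert (lam (conj (disj p r) p) <= lam p) by (apply lam_mono; intro q; rewrite mem_conj; tauto).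
  assert (lam (conj (disj p r) (neg p)) <= lam r) by
    (apply lam_mono; intro q; rewrite mem_conj, mem_neg, mem_disj; tauto).
  lra.
Qed.

Lemma lam_disj_eq p r : (forall q, mem q p -> mem q r -> False) -> lam (disj p r) = lam p + lam r.
Proof.
  intro D. rewrite (lam_split (disj p r) p).
  f_equal; apply lam_ext; intro q; rewrite mem_conj; try rewrite mem_neg; rewrite mem_disj; firstorder.
Qed.

Lemma basic_cover (P : Phi -> Prop) : (forall q, exists r, P r /\ mem q r) ->
  exists l, (forall r, In r l -> P r) /\ forall q, exists r, In r l /\ mem q r.
Proof.
  intro Hcov. set (Sg := fun p => exists r, P r /\ p = neg r).
  assert (Hl : ~ forall l, (forall p, In p l -> Sg p) -> exists q, forall p, In p l -> mem q p).
  { intro H. destruct (stone_compact Sg H) as [q Hq]. destruct (Hcov q) as [r [Pr qr]].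
    apply (mem_neg q r); auto. apply Hq. exists r; auto. }
  apply not_all_ex_not in Hl. destruct Hl as [l Hl]. apply imply_to_and in Hl. destruct Hl as [Sl Hl].
  destruct (list_choice (fun p r => P r /\ p = neg r) l Sl) as [lr Hlr].
  exists (filter (fun r => decide (P r)) lr). split.
  - intros r Hr. apply filter_In in Hr. apply decide_true, Hr.
  - intro q. apply NNPP; intro N. apply Hl. exists q. intros p Hp.
    destruct (Hlr p Hp) as [r [Hr [Pr ->]]]. apply mem_neg. intro qr.
    apply N. exists r. rewrite filter_In, decide_true. auto.
Qed.

Lemma closed_compact W : isopen W -> iscompact (fun q => ~ W q).
Proof.
  intros HW J U HU Hcov.
  set (covered := fun r (o : option J) =>
         match o with Some j => sub (basic r) (U j) | None => sub (basic r) W end).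
  destruct (basic_cover (fun r => exists o, covered r o)) as [l [Hl Hq]].
  { intro q. destruct (classic (W q)) as [Wq|nWq].
    - destruct (HW q Wq) as [r [qr rW]]. exists r; split; [exists None|]; auto.
    - destruct (Hcov q nWq) as [j Uj]. destruct (HU j q Uj) as [r [qr rU]].
      exists r; split; [exists (Some j)|]; auto. }
  destruct (list_choice covered l Hl) as [lo Hlo].
  exists (flat_map (fun o => match o with Some j => j :: nil | None => nil end) lo).
  intros q nWq. destruct (Hq q) as [r [Hr qr]]. destruct (Hlo r Hr) as [[j|] [Ho Hc]].
  - exists j. split; [apply in_flat_map; exists (Some j); simpl; auto|apply Hc, qr].
  - destruct (nWq (Hc q qr)).
Qed.

Lemma basic_compact p : iscompact (basic p).
Proof.
  intros J U HU Hcov.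
  destruct (closed_compact _ (open_basic (neg p)) J U HU) as [l Hl].
  { intros q Hq. apply Hcov. unfold basic in Hq. rewrite mem_neg in Hq. apply NNPP; auto. }
  exists l. intros q Hq. apply Hl. unfold basic; rewrite mem_neg; auto.
Qed.

Definition inner (U : X -> Prop) : R :=
  lub (fun x => exists p, sub (basic p) U /\ x = lam p).

Lemma inner_bounded U : bound (fun x => exists p, sub (basic p) U /\ x = lam p).
Proof. exists 1; intros x [p [_ ->]]; apply lam_le1. Qed.

Lemma inner_nonempty U : exists x, exists p, sub (basic p) U /\ x = lam p.
Proof. exists (lam bot), bot; split; auto. intros q H; destruct (mem_bot q H). Qed.

Lemma inner_ge U p : sub (basic p) U -> lam p <= inner U.
Proof. intro H; apply lub_upper; [apply inner_bounded|exists p; auto]. Qed.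

Lemma inner_le U c : (forall p, sub (basic p) U -> lam p <= c) -> inner U <= c.
Proof. intro H; apply lub_least; [apply inner_nonempty|intros x [p [Hp ->]]; auto]. Qed.

Lemma inner_approx U eps : 0 < eps -> exists p, sub (basic p) U /\ inner U - eps < lam p.
Proof.
  intro He. destruct (lub_approx _ eps (inner_bounded U) (inner_nonempty U) He) as [x [[p [Hp ->]] Hx]].
  exists p; auto.
Qed.

Lemma inner_mono U V : sub U V -> inner U <= inner V.
Proof. intro H; apply inner_le; intros p Hp; apply inner_ge; intros q Hq; auto. Qed.

Lemma inner_ge0 U : 0 <= inner U.
Proof. apply Rle_trans with (lam bot); auto. apply inner_ge; intros q H; destruct (mem_bot q H). Qed.

Lemma inner_empty U : sub U (fun _ => False) -> inner U = 0.
Proof.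
  intro H; apply Rle_antisym; [|apply inner_ge0].
  apply inner_le; intros p Hp. rewrite lam_empty; [lra|]. intros q Hq; apply (H q), Hp, Hq.
Qed.

Lemma inner_full : inner (fun _ => True) = 1.
Proof.
  apply Rle_antisym; [apply inner_le; intros; apply lam_le1|].
  rewrite <- lam_top; apply inner_ge; intros q _; auto.
Qed.

Lemma disjl_filter_sub U l : sub (basic (disjl (filter (fun j => decide (sub (basic j) U)) l))) U.
Proof.
  intros q Hq. apply mem_disjl in Hq. destruct Hq as [j [Hj qj]].
  apply filter_In in Hj. apply (proj1 (decide_true _) (proj2 Hj)), qj.
Qed.

(* By compactness [p] is covered by finitely many clopen sets, each inside U or inside V. *)
Lemma inner_union2 U V : isopen U -> isopen V ->
  inner (fun q => U q \/ V q) <= inner U + inner V.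
Proof.
  intros HU HV. apply inner_le; intros p Hp.
  set (small := fun j => sub (basic j) U \/ sub (basic j) V).
  destruct (basic_compact p Phi (fun j q => mem q j /\ small j)) as [l Hl].
  - intros j q [Hq Hj]. exists j; split; auto. intros q' Hq'; split; auto.
  - intros q Hq. destruct (Hp q Hq) as [Uq|Vq].
    + destruct (HU q Uq) as [r [qr rU]]. exists r; split; [|left]; auto.
    + destruct (HV q Vq) as [r [qr rV]]. exists r; split; [|right]; auto.
  - set (pU := disjl (filter (fun j => decide (sub (basic j) U)) l)).
    set (pV := disjl (filter (fun j => decide (sub (basic j) V)) l)).
    apply Rle_trans with (lam (disj pU pV)).
    { apply lam_mono. intros q Hq. destruct (Hl q Hq) as [j [Hj [qj [jU|jV]]]];
      apply mem_disj; [left|right]; apply mem_disjl; exists j;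
      rewrite filter_In, decide_true; auto. }
    apply Rle_trans with (lam pU + lam pV); [apply lam_disj_le|].
    apply Rplus_le_compat; apply inner_ge, disjl_filter_sub.
Qed.

Lemma inner_union_below U N : (forall n, isopen (U n)) ->
  inner (fun q => exists n, (n < N)%nat /\ U n q) <= psum (fun n => inner (U n)) N.
Proof.
  intro HU; induction N as [|N IH]; simpl.
  - rewrite inner_empty; [lra|]. intros q [n [Hn _]]; inversion Hn.
  - apply Rle_trans with (inner (fun q => (exists n, (n < N)%nat /\ U n q) \/ U N q)).
    + apply inner_mono. intros q [n [Hn Hq]].
      destruct (Nat.eq_dec n N) as [->|ne]; [right; auto|left; exists n; split; [lia|auto]].
    + eapply Rle_trans; [apply inner_union2; auto|lra].
      apply open_bigcup. intros n q [Hn Hq]. destruct (HU n q Hq) as [p [qp pU]].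
      exists p; split; auto. intros q' Hq'; split; auto.
Qed.

Lemma inner_countable_subadditive U eps : (forall n, isopen (U n)) -> 0 < eps ->
  exists N, inner (fun q => exists n, U n q) <= psum (fun n => inner (U n)) N + eps.
Proof.
  intros HU He. destruct (inner_approx (fun q => exists n, U n q) eps He) as [p [Hp Hlt]].
  destruct (basic_compact p nat U HU) as [l Hl]; [exact Hp|].
  exists (S (list_max l)).
  assert (lam p <= inner (fun q => exists n, (n < S (list_max l))%nat /\ U n q)).
  { apply inner_ge. intros q Hq. destruct (Hl q Hq) as [j [Hj Uj]]. exists j; split; auto.
    apply Nat.lt_succ_r. pose proof (proj1 (list_max_le l _) (le_n _)) as Hmax.
    rewrite Forall_forall in Hmax. auto. }
  pose proof (inner_union_below U (S (list_max l)) HU). lra.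
Qed.

Definition outer (A : X -> Prop) : R :=
  - lub (fun x => exists U, isopen U /\ sub A U /\ x = - inner U).

Lemma outer_bounded A : bound (fun x => exists U, isopen U /\ sub A U /\ x = - inner U).
Proof. exists 0; intros x [U [_ [_ ->]]]; pose proof (inner_ge0 U); lra. Qed.

Lemma outer_nonempty A : exists x, exists U, isopen U /\ sub A U /\ x = - inner U.
Proof. exists (- inner (fun _ => True)), (fun _ => True). repeat split; auto using open_full. Qed.

Lemma outer_le A U : isopen U -> sub A U -> outer A <= inner U.
Proof.
  intros HU HA. unfold outer.
  assert (- inner U <= lub (fun x => exists U, isopen U /\ sub A U /\ x = - inner U)); [|lra].
  apply lub_upper; [apply outer_bounded|exists U; auto].
Qed.

Lemma outer_ge A c : (forall U, isopen U -> sub A U -> c <= inner U) -> c <= outer A.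
Proof.
  intro H. unfold outer.
  assert (lub (fun x => exists U, isopen U /\ sub A U /\ x = - inner U) <= - c); [|lra].
  apply lub_least; [apply outer_nonempty|]. intros x [U [HU [HA ->]]]. specialize (H U HU HA). lra.
Qed.

Lemma outer_approx A eps : 0 < eps -> exists U, isopen U /\ sub A U /\ inner U < outer A + eps.
Proof.
  intro He. destruct (lub_approx _ eps (outer_bounded A) (outer_nonempty A) He)
    as [x [[U [HU [HA ->]]] Hx]].
  exists U. unfold outer. repeat split; auto. lra.
Qed.

Lemma outer_mono A B : sub A B -> outer A <= outer B.
Proof. intro H; apply outer_ge; intros U HU HB; apply outer_le; auto; intros q Hq; auto. Qed.

Lemma outer_ext A B : (forall q, A q <-> B q) -> outer A = outer B.
Proof. intro H; apply Rle_antisym; apply outer_mono; intros q; apply H. Qed.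

Lemma outer_ge0 A : 0 <= outer A.
Proof. apply outer_ge; intros; apply inner_ge0. Qed.

Lemma outer_open U : isopen U -> outer U = inner U.
Proof.
  intro HU; apply Rle_antisym; [apply outer_le; auto; intros q; auto|].
  apply outer_ge; intros V _ HV; apply inner_mono; auto.
Qed.

Lemma outer_full : outer (fun _ => True) = 1.
Proof. rewrite outer_open by apply open_full. apply inner_full. Qed.

Lemma outer_empty : outer (fun _ => False) = 0.
Proof.
  apply Rle_antisym; [|apply outer_ge0]. rewrite <- (inner_empty (basic bot)) by (intro q; apply mem_bot).
  apply outer_le; [apply open_basic|intros q []].
Qed.

Lemma outer_countable_subadditive (F : nat -> X -> Prop) eps : 0 < eps ->
  exists N, outer (fun x => exists n, F n x) <= psum (fun i => outer (F i)) N + eps.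
Proof.
  intro He. set (d := fun n : nat => eps / 2 / 2 ^ S n).
  assert (Hd : forall N, 0 <= eps / 2 / 2 ^ N).
  { intro N. apply Rlt_le, Rdiv_lt_0_compat; [lra|apply pow_lt; lra]. }
  assert (HU : forall n, exists U, isopen U /\ sub (F n) U /\ inner U < outer (F n) + d n).
  { intro n; apply outer_approx. apply Rdiv_lt_0_compat; [lra|apply pow_lt; lra]. }
  apply choice in HU. destruct HU as [U HU].
  destruct (inner_countable_subadditive U (eps/2)) as [N HN]; [apply HU|lra|].
  exists N.
  assert (outer (fun x => exists n, F n x) <= inner (fun q => exists n, U n q)).
  { apply outer_le; [apply open_bigcup, HU|]. intros q [n Hq]. exists n. apply HU; auto. }
  assert (psum (fun n => inner (U n)) N <= psum (fun n => outer (F n)) N + psum d N).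
  { rewrite <- psum_plus. apply psum_le_compat; intro n; left; apply HU. }
  pose proof (psum_halves (eps/2) N). pose proof (Hd N). unfold d in *. lra.
Qed.

(* With V an open superset of A and p a clopen set nearly filling V inside U, the rest of A
   lies in the open set V \ p, whose inner measure is at most inner V - lam p. *)
Lemma outer_split_open_le U A : isopen U ->
  outer (fun x => A x /\ U x) + outer (fun x => A x /\ ~ U x) <= outer A.
Proof.
  intro HU. apply Rle_plus_epsilon; intros e He.
  destruct (outer_approx A (e/2)) as [V [HV [AV HVl]]]; [lra|].
  destruct (inner_approx (fun q => V q /\ U q) (e/2)) as [p [Hp Hpl]]; [lra|].
  assert (H1 : outer (fun x => A x /\ U x) <= inner (fun q => V q /\ U q)).
  { apply outer_le; [apply open_inter|intros q [Aq Uq]]; auto. }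
  assert (H2 : outer (fun x => A x /\ ~ U x) <= inner (fun q => V q /\ mem q (neg p))).
  { apply outer_le; [apply open_inter; auto; apply open_basic|].
    intros q [Aq nUq]. rewrite mem_neg. split; auto. intro Hq; apply nUq, Hp, Hq. }
  assert (H3 : inner (fun q => V q /\ mem q (neg p)) <= inner V - lam p).
  { apply inner_le; intros r Hr.
    assert (lam (disj p r) <= inner V).
    { apply inner_ge. intros q Hq. apply mem_disj in Hq.
      destruct Hq as [Hq|Hq]; [apply Hp, Hq|apply Hr, Hq]. }
    rewrite lam_disj_eq in H; [lra|]. intros q Hq1 Hq2. apply (mem_neg q p); [apply Hr|]; auto. }
  lra.
Qed.

Definition measurable := Caratheodory.measurable X outer.

Lemma measurable_open U : isopen U -> measurable U.
Proof.
  intro HU. apply (Caratheodory.measurableP X outer outer_empty outer_ge0 outer_mono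
    outer_countable_subadditive).
  intro A; apply outer_split_open_le; auto.
Qed.

Lemma borel_measurable B : isborel B -> measurable B.
Proof.
  intro H; apply H; [apply measurable_open| |];
  [apply (Caratheodory.measurable_compl X outer outer_empty outer_ge0 outer_mono outer_countable_subadditive)
  |apply (Caratheodory.measurable_bigcup X outer outer_empty outer_ge0 outer_mono outer_countable_subadditive)].
Qed.

Lemma outer_split A Y : measurable A ->
  outer Y = outer (fun x => Y x /\ A x) + outer (fun x => Y x /\ ~ A x).
Proof. apply Caratheodory.measurable_split. Qed.

Lemma outer_compl B : measurable B -> outer (fun q => ~ B q) = 1 - outer B.
Proof.
  intro H. rewrite <- outer_full, (outer_split B (fun _ => True)) by auto.
  rewrite (outer_ext (fun x => True /\ B x) B), (outer_ext (fun x => True /\ ~ B x) (fun q => ~ B q));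
  [ring| |]; intro; tauto.
Qed.

Lemma outer_finite_additive (B : nat -> X -> Prop) N : (forall n, isborel (B n)) ->
  (forall n m q, n <> m -> B n q -> B m q -> False) ->
  outer (fun q => exists n, (n < N)%nat /\ B n q) = psum (fun n => outer (B n)) N.
Proof.
  intros HB HD. induction N as [|N IH]; simpl.
  - rewrite <- outer_empty. apply outer_ext. intro q; split; [intros [n [Hn _]]; inversion Hn|intros []].
  - rewrite (outer_split (B N)) by (apply borel_measurable; auto).
    rewrite <- IH, Rplus_comm. f_equal; apply outer_ext; intro q; split.
    + intros [[n [Hn Hq]] Hq']. exists n; split; auto.
      destruct (Nat.eq_dec n N) as [->|ne]; [contradiction|lia].
    + intros [n [Hn Hq]]. split; [exists n; split; auto|]. intro HN. apply (HD n N q); auto. lia.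
    + intros [_ H]; auto.
    + intro H; split; auto. exists N; split; auto.
Qed.

Lemma outer_sigma_additive (B : nat -> X -> Prop) : (forall n, isborel (B n)) ->
  (forall n m q, n <> m -> B n q -> B m q -> False) ->
  infinite_sum (fun n => outer (B n)) (outer (fun q => exists n, B n q)).
Proof.
  intros HB HD eps He.
  destruct (outer_countable_subadditive B (eps / 2)) as [N0 HN0]; [lra|].
  exists N0. intros n Hn. unfold R_dist. rewrite sum_f_R0_psum, <- outer_finite_additive by auto.
  assert (outer (fun q => exists k, (k < S n)%nat /\ B k q) <= outer (fun q => exists k, B k q)).
  { apply outer_mono; intros q [k [_ Hk]]; exists k; auto. }
  assert (psum (fun n => outer (B n)) N0 <= psum (fun n => outer (B n)) (S n)).
  { apply psum_le_incr; [intro; apply outer_ge0|lia]. }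
  rewrite <- !outer_finite_additive in * by auto.
  unfold Rabs; destruct (Rcase_abs _); lra.
Qed.

Theorem outer_regular_borel_prob :
  (forall B, isborel B -> 0 <= outer B) /\
  outer (fun _ => True) = 1 /\
  (forall B : nat -> X -> Prop, (forall n, isborel (B n)) ->
     (forall n m q, n <> m -> B n q -> B m q -> False) ->
     infinite_sum (fun n => outer (B n)) (outer (fun q => exists n, B n q))) /\
  (forall B, isborel B -> forall eps, 0 < eps ->
     (exists K, iscompact K /\ (forall q, K q -> B q) /\ outer B - eps < outer K) /\
     (exists U, isopen U /\ (forall q, B q -> U q) /\ outer U < outer B + eps)).
Proof.
  split; [intros; apply outer_ge0|]. split; [apply outer_full|]. split; [apply outer_sigma_additive|].
  intros B HB eps He. split.
  - destruct (outer_approx (fun q => ~ B q) eps He) as [U [HU [BU HUl]]].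
    exists (fun q => ~ U q). split; [apply closed_compact; auto|]. split.
    + intros q Hq. apply NNPP; intro nB; apply Hq, BU, nB.
    + rewrite outer_compl by (apply measurable_open; auto).
      rewrite outer_compl in HUl by (apply borel_measurable; auto).
      rewrite (outer_open U HU). lra.
  - destruct (outer_approx B eps He) as [U [HU [BU HUl]]].
    exists U; repeat split; auto. rewrite (outer_open U HU); auto.
Qed.

Definition img (h : Phi -> Phi) (A : X -> Prop) : X -> Prop :=
  fun q => exists q', A q' /\ forall p, mem q' (h p) <-> mem q p.

Hypothesis mem_ext : forall q q', (forall p, mem q p <-> mem q' p) -> q = q'.

Lemma outer_img_le (h : Phi -> Phi) A :
  (forall p, lam (h p) = lam p) ->
  (forall q', exists q, forall p, mem q' (h p) <-> mem q p) ->
  (forall q, exists q', forall p, mem q' (h p) <-> mem q p) ->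
  (forall p, exists r, forall q, mem q (h r) <-> mem q p) ->
  outer (img h A) <= outer A.
Proof.
  intros lam_h act_h onto_h h_onto. apply outer_ge; intros U HU AU.
  assert (Ho : isopen (img h U)).
  { intros q [q' [Uq' Hq]]. destruct (HU q' Uq') as [p [q'p pU]]. destruct (h_onto p) as [r Hr].
    exists r. split; [apply Hq, Hr, q'p|].
    intros q2 Hq2. destruct (onto_h q2) as [q2' H2]. exists q2'. split; auto.
    apply pU, Hr, H2, Hq2. }
  apply Rle_trans with (inner (img h U)).
  { apply outer_le; auto. intros q [q' [Aq' Hq]]; exists q'; split; auto. }
  apply inner_le; intros p Hp. rewrite <- lam_h. apply inner_ge. intros q' Hq'.
  destruct (act_h q') as [q Hq]. destruct (Hp q (proj1 (Hq p) Hq')) as [q'' [Uq'' H'']].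
  replace q' with q''; auto. apply mem_ext; intro r.
  destruct (h_onto r) as [r' Hr']. rewrite <- (Hr' q''), <- (Hr' q'), H'', Hq. tauto.
Qed.

Lemma outer_img (f g : Phi -> Phi) A :
  (forall p, lam (f p) = lam p) -> (forall p, lam (g p) = lam p) ->
  (forall q p, mem q (f (g p)) <-> mem q p) -> (forall q p, mem q (g (f p)) <-> mem q p) ->
  (forall q', exists q, forall p, mem q' (f p) <-> mem q p) ->
  (forall q', exists q, forall p, mem q' (g p) <-> mem q p) ->
  outer (img f A) = outer A.
Proof.
  intros lam_f lam_g fg gf act_f act_g.
  assert (onto_f : forall q, exists q', forall p, mem q' (f p) <-> mem q p).
  { intro q. destruct (act_g q) as [q' Hq']. exists q'. intro p. rewrite <- Hq'. apply gf. }
  assert (onto_g : forall q, exists q', forall p, mem q' (g p) <-> mem q p).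
  { intro q. destruct (act_f q) as [q' Hq']. exists q'. intro p. rewrite <- Hq'. apply fg. }
  apply Rle_antisym; [apply outer_img_le; auto; intro p; exists (g p); auto|].
  rewrite (outer_ext A (img g (img f A))).
  - apply outer_img_le; auto. intro p; exists (f p); auto.
  - intro q; split.
    + intro Aq. destruct (act_f q) as [q1 H1]. exists q1. split; [exists q; split; auto|].
      intro p. rewrite <- H1. apply fg.
    + intros [q1 [[q0 [Aq0 H0]] H1]]. replace q with q0; auto. apply mem_ext; intro p.
      rewrite <- H1, <- H0. symmetry; apply fg.
Qed.

End StoneMeasure.

Arguments TVar {S V}. Arguments TApp {S V}.
Arguments FEq {S V}. Arguments FRel {S V}. Arguments FNot {S V}.
Arguments FAnd {S V}. Arguments FEx {S V}.

Fixpoint fin_all (n : nat) : list (Fin.t n) :=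
  match n with O => [] | S n => Fin.F1 :: map Fin.FS (fin_all n) end.

Lemma fin_all_In n (i : Fin.t n) : In i (fin_all n).
Proof. induction i; simpl; auto. right; apply in_map; auto. Qed.

Fixpoint lnth {X : Type} (l : list X) : Fin.t (length l) -> X :=
  match l return Fin.t (length l) -> X with
  | nil => fun i => Fin.case0 (fun _ => X) i
  | x :: l => fun i => Fin.caseS' i (fun _ => X) x (lnth l)
  end.

Lemma lnth_In {X : Type} (l : list X) i : In (lnth l i) l.
Proof.
  induction l as [|x l IH]; simpl in *; [apply (Fin.case0 (fun _ => False) i)|].
  apply (Fin.caseS' i (fun i => x = Fin.caseS' i (fun _ => X) x (lnth l) \/
                                In (Fin.caseS' i (fun _ => X) x (lnth l)) l)); simpl; auto.
Qed.

Lemma lnth_surj {X : Type} (l : list X) x : In x l -> exists i, lnth l i = x.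
Proof.
  induction l as [|y l IH]; simpl; intros H; [destruct H|].
  destruct H as [<-|H]; [exists Fin.F1; reflexivity|].
  destruct (IH H) as [i Hi]. exists (Fin.FS i); simpl; auto.
Qed.

Definition lindex {X : Type} (l : list X) (x : X) : option (Fin.t (length l)) :=
  match excluded_middle_informative (exists i, lnth l i = x) with
  | left H => Some (proj1_sig (constructive_indefinite_description _ H))
  | right _ => None
  end.

Lemma lindex_spec {X : Type} (l : list X) x :
  match lindex l x with Some i => lnth l i = x | None => ~ In x l end.
Proof.
  unfold lindex. destruct (excluded_middle_informative _) as [H|H].
  - exact (proj2_sig (constructive_indefinite_description _ H)).
  - intro Hx. apply H, lnth_surj, Hx.
Qed.

Section Syntax.
Variable S : signature.

Lemma fmap_ext V W (h h' : V -> W) (p : formula S V) :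
  (forall v, h v = h' v) -> fmap S h p = fmap S h' p.
Proof. intro H; replace h' with h; auto; apply functional_extensionality; auto. Qed.

Lemma tmap_comp V W U (h1 : V -> W) (h2 : W -> U) (t : term S V) :
  tmap S h2 (tmap S h1 t) = tmap S (fun v => h2 (h1 v)) t.
Proof.
  induction t as [v|f args IH]; simpl; auto.
  f_equal; apply functional_extensionality; intro i; apply IH.
Qed.

Lemma fmap_comp V W U (h1 : V -> W) (h2 : W -> U) (p : formula S V) :
  fmap S h2 (fmap S h1 p) = fmap S (fun v => h2 (h1 v)) p.
Proof.
  revert W U h1 h2; induction p as [V t u|V r args|V p IH|V p IHp q IHq|V p IH]; intros W U h1 h2; simpl.
  - rewrite !tmap_comp; auto.
  - f_equal; apply functional_extensionality; intro i; apply tmap_comp.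
  - rewrite IH; auto.
  - rewrite IHp, IHq; auto.
  - rewrite IH. f_equal. apply fmap_ext. intros [v|]; reflexivity.
Qed.

Lemma tmap_id V (t : term S V) : tmap S (fun v => v) t = t.
Proof. induction t as [v|f args IH]; simpl; auto; f_equal; apply functional_extensionality; auto. Qed.

Lemma fmap_id V (p : formula S V) : fmap S (fun v => v) p = p.
Proof.
  induction p as [V t u|V r args|V p IH|V p IHp q IHq|V p IH]; simpl.
  - rewrite !tmap_id; auto.
  - f_equal; apply functional_extensionality; intro i; apply tmap_id.
  - rewrite IH; auto.
  - rewrite IHp, IHq; auto.
  - f_equal. rewrite <- IH at 2. apply fmap_ext. intros [v|]; auto.
Qed.

Lemma teval_tmap (M : structure S) V W (h : V -> W) (e : W -> M) (t : term S V) :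
  teval S M e (tmap S h t) = teval S M (fun v => e (h v)) t.
Proof.
  induction t as [v|f args IH]; simpl; auto.
  f_equal; apply functional_extensionality; intro i; apply IH.
Qed.

Lemma sat_fmap (M : structure S) V W (h : V -> W) (p : formula S V) (e : W -> M) :
  sat S M e (fmap S h p) <-> sat S M (fun v => e (h v)) p.
Proof.
  revert W h e; induction p as [V t u|V r args|V p IH|V p IHp q IHq|V p IH]; intros W h e; simpl.
  - rewrite !teval_tmap; tauto.
  - replace (fun i => teval S M e (tmap S h (args i)))
      with (fun i => teval S M (fun v => e (h v)) (args i)); [tauto|].
    apply functional_extensionality; intro i; rewrite teval_tmap; auto.
  - rewrite IH; tauto.
  - rewrite IHp, IHq; tauto.
  - assert (E : forall m, (fun v => ext e m (omap h v)) = ext (fun v => e (h v)) m)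
      by (intro m; apply functional_extensionality; intros [v|]; reflexivity).
    split; intros [m Hm]; exists m; rewrite IH, E in *; auto.
Qed.

Fixpoint tvars {V : Type} (t : term S V) : list V :=
  match t with
  | TVar v => [v]
  | TApp f args => flat_map (fun i => tvars (args i)) (fin_all _)
  end.

Fixpoint vars {V : Type} (p : formula S V) : list V :=
  match p with
  | FEq t u => tvars t ++ tvars u
  | FRel r args => flat_map (fun i => tvars (args i)) (fin_all _)
  | FNot p => vars p
  | FAnd p q => vars p ++ vars q
  | FEx p => flat_map (fun o => match o with Some v => [v] | None => [] end) (vars p)
  end.

Lemma teval_vars (M : structure S) V (t : term S V) (e e' : V -> M) :
  (forall v, In v (tvars t) -> e v = e' v) -> teval S M e t = teval S M e' t.
Proof.
  induction t as [v|f args IH]; simpl; intro H; [apply H; auto|].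
  f_equal; apply functional_extensionality; intro i; apply IH.
  intros v Hv; apply H. apply in_flat_map. exists i; split; auto. apply fin_all_In.
Qed.

Lemma sat_vars (M : structure S) V (p : formula S V) (e e' : V -> M) :
  (forall v, In v (vars p) -> e v = e' v) -> (sat S M e p <-> sat S M e' p).
Proof.
  revert e e'; induction p as [V t u|V r args|V p IH|V p IHp q IHq|V p IH]; intros e e' H; simpl in *.
  - rewrite (teval_vars M V t e e'), (teval_vars M V u e e'); try tauto;
    intros v Hv; apply H; apply in_or_app; auto.
  - replace (fun i => teval S M e' (args i)) with (fun i => teval S M e (args i)); [tauto|].
    apply functional_extensionality; intro i. apply teval_vars. intros v Hv; apply H.
    apply in_flat_map. exists i; split; auto. apply fin_all_In.
  - rewrite (IH e e'); tauto.
  - rewrite (IHp e e'), (IHq e e'); try tauto; intros v Hv; apply H; apply in_or_app; auto.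
  - assert (E : forall m, sat S M (ext e m) p <-> sat S M (ext e' m) p).
    { intro m; apply IH. intros [v|] Hv; simpl; auto.
      apply H; apply in_flat_map; exists (Some v); simpl; auto. }
    split; intros [m Hm]; exists m; apply E; auto.
Qed.

Lemma sat_fmap_vars (N : structure S) V W (h1 h2 : V -> W) (p : formula S V) (e : W -> N) :
  (forall v, In v (vars p) -> h1 v = h2 v) -> (sat S N e (fmap S h1 p) <-> sat S N e (fmap S h2 p)).
Proof. intro H. rewrite !sat_fmap. apply sat_vars. intros v Hv; rewrite H; auto. Qed.

Lemma tvars_tmap V W (h : V -> W) (t : term S V) v :
  In v (tvars (tmap S h t)) -> exists w, In w (tvars t) /\ v = h w.
Proof.
  induction t as [x|f args IH]; simpl; intro H.
  - destruct H as [<-|[]]. exists x; auto.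
  - apply in_flat_map in H. destruct H as [i [_ Hi]]. destruct (IH i Hi) as [w [Hw ->]].
    exists w; split; auto. apply in_flat_map. exists i; split; auto. apply fin_all_In.
Qed.

Lemma vars_fmap V W (h : V -> W) (p : formula S V) v :
  In v (vars (fmap S h p)) -> exists w, In w (vars p) /\ v = h w.
Proof.
  revert W h v; induction p as [V t u|V r args|V p IH|V p IHp q IHq|V p IH]; intros W h v; simpl; intro H.
  - apply in_app_or in H. destruct H as [H|H]; apply tvars_tmap in H; destruct H as [w [Hw ->]];
    exists w; split; auto; apply in_or_app; auto.
  - apply in_flat_map in H. destruct H as [i [_ Hi]]. apply tvars_tmap in Hi. destruct Hi as [w [Hw ->]].
    exists w; split; auto. apply in_flat_map. exists i; split; auto. apply fin_all_In.
  - apply IH; auto.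
  - apply in_app_or in H. destruct H as [H|H]; [apply IHp in H|apply IHq in H]; destruct H as [w [Hw ->]];
    exists w; split; auto; apply in_or_app; auto.
  - apply in_flat_map in H. destruct H as [[x|] [Ho Hv]]; simpl in Hv; [|destruct Hv].
    destruct Hv as [<-|[]]. apply IH in Ho. destruct Ho as [[w|] [Hw E]]; simpl in E; inversion E; subst.
    exists w; split; auto. apply in_flat_map. exists (Some w); simpl; auto.
Qed.

Lemma teval_aut (M : structure S) s V (e : V -> M) (t : term S V) : automorphism S M s ->
  teval S M (fun v => s (e v)) t = s (teval S M e t).
Proof.
  intros [_ [_ [Hf _]]]. induction t as [v|f args IH]; simpl; auto.
  rewrite Hf. f_equal; apply functional_extensionality; intro i; apply IH.
Qed.

Lemma sat_aut (M : structure S) s V (p : formula S V) (e : V -> M) : automorphism S M s ->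
  sat S M (fun v => s (e v)) p <-> sat S M e p.
Proof.
  intro Hs. pose proof Hs as [Hinj [Hsurj [_ Hrel]]].
  revert e; induction p as [V t u|V r args|V p IH|V p IHp q IHq|V p IH]; intros e; simpl.
  - rewrite !teval_aut by auto. split; [apply Hinj|intros ->; auto].
  - rewrite (Hrel r (fun i => teval S M e (args i))).
    replace (fun i => teval S M (fun v => s (e v)) (args i))
      with (fun i => s (teval S M e (args i))); [tauto|].
    apply functional_extensionality; intro i; rewrite teval_aut; auto.
  - rewrite IH; tauto.
  - rewrite IHp, IHq; tauto.
  - assert (E : forall m, ext (fun v => s (e v)) (s m) = (fun v => s (ext e m v)))
      by (intro m; apply functional_extensionality; intros [v|]; reflexivity).
    split; intros [m Hm].
    + destruct (Hsurj m) as [m0 <-]. exists m0. rewrite <- IH, <- E. exact Hm.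
    + exists (s m). rewrite E, IH. exact Hm.
Qed.

Definition ftrue {V : Type} : formula S V := FEx (FEq (TVar None) (TVar None)).

Lemma sat_ftrue (N : structure S) V (e : V -> N) : sat S N e ftrue.
Proof. destruct (carrier_inh S N) as [m]. exists m; reflexivity. Qed.

Definition conjl {V : Type} (l : list (formula S V)) : formula S V := fold_right FAnd ftrue l.

Lemma sat_conjl (N : structure S) V (e : V -> N) l :
  sat S N e (conjl l) <-> forall p, In p l -> sat S N e p.
Proof.
  induction l as [|p l IH]; simpl; [split; [intros _ p []|intros; apply (sat_ftrue N V e)]|].
  rewrite IH. split; [intros [H1 H2] r [<-|Hr]; auto|intros H; split; auto].
Qed.

End Syntax.

Arguments ftrue {S V}.

Section CompleteTypes.
Variables (S : signature) (I : Type) (N : structure S) (q : formula S (I + N) -> Prop).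
Hypothesis Hq : complete_type S I N q.

Lemma complete_type_neg p : q (FNot p) <-> ~ q p.
Proof.
  split.
  - intros H1 H2. destruct (proj1 Hq [p; FNot p]) as [a Ha]; [intros r [<-|[<-|[]]]; auto|].
    apply (Ha (FNot p)); simpl; auto. apply Ha; simpl; auto.
  - intro H. destruct (proj2 Hq p); tauto.
Qed.

Lemma complete_type_imp p r :
  (forall a, sat S N (penv S N a) p -> sat S N (penv S N a) r) -> q p -> q r.
Proof.
  intros H Hp. apply NNPP; intro Hr. apply complete_type_neg in Hr.
  destruct (proj1 Hq [p; FNot r]) as [a Ha]; [intros x [<-|[<-|[]]]; auto|].
  apply (Ha (FNot r)); simpl; auto. apply H, Ha; simpl; auto.
Qed.

Lemma complete_type_and p r : q (FAnd p r) <-> q p /\ q r.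
Proof.
  split.
  - intro H; split; apply (complete_type_imp (FAnd p r)); auto; intros a [? ?]; auto.
  - intros [H1 H2]. apply NNPP; intro H. apply complete_type_neg in H.
    destruct (proj1 Hq [p; r; FNot (FAnd p r)]) as [a Ha]; [intros x [<-|[<-|[<-|[]]]]; auto|].
    apply (Ha (FNot (FAnd p r))); simpl; auto. split; apply Ha; simpl; auto.
Qed.

Lemma complete_type_valid p : (forall a, sat S N (penv S N a) p) -> q p.
Proof.
  intro H. apply (complete_type_imp ftrue); [intros; apply H|].
  destruct (proj2 Hq ftrue) as [?|H0]; auto.
  destruct (proj1 Hq [FNot ftrue]) as [a Ha]; [intros x [<-|[]]; auto|].
  destruct (Ha (FNot ftrue) (or_introl eq_refl) (sat_ftrue S N _ (penv S N a))).
Qed.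

End CompleteTypes.

Section TypeSpace.
Variables (S : signature) (I : Type) (pi : formula S I -> Prop) (N : structure S).

Lemma Spi_ext (q q' : Spi S I pi N) : (forall p, proj1_sig q p <-> proj1_sig q' p) -> q = q'.
Proof.
  intro H. destruct q as [q Hq], q' as [q' Hq']; simpl in H.
  assert (q = q') by (apply functional_extensionality; intro p; apply propositional_extensionality; auto).
  subst q'. f_equal. apply proof_irrelevance.
Qed.

Lemma Spi_neg (q : Spi S I pi N) p : proj1_sig q (FNot p) <-> ~ proj1_sig q p.
Proof. exact (complete_type_neg S I N _ (proj1 (proj2_sig q)) p). Qed.

Lemma Spi_and (q : Spi S I pi N) p r : proj1_sig q (FAnd p r) <-> proj1_sig q p /\ proj1_sig q r.
Proof. exact (complete_type_and S I N _ (proj1 (proj2_sig q)) p r). Qed.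

Lemma Spi_ftrue (q : Spi S I pi N) : proj1_sig q ftrue.
Proof. apply (complete_type_valid S I N _ (proj1 (proj2_sig q))). intro a; apply sat_ftrue. Qed.

Lemma Spi_of_finsat (Sg : formula S (I + N) -> Prop) :
  Lindenbaum.fsat _ _ (fun a p => sat S N (penv S N a) p)
    (fun p => Sg p \/ exists r, pi r /\ p = fmap S inl r) ->
  exists q : Spi S I pi N, forall p, Sg p -> proj1_sig q p.
Proof.
  intro H. destruct (Lindenbaum.lindenbaum _ (I -> N) (fun a p => sat S N (penv S N a) p) FNot
    (fun a p => iff_refl _) _ H)
    as [q [HSq [Hfin Hmax]]].
  assert (Hq : complete_type S I N q /\ forall r, pi r -> q (fmap S inl r)).
  { split; [split; auto|]. intros r Hr; apply HSq; right; exists r; auto. }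
  exists (exist _ q Hq). simpl; intros; apply HSq; auto.
Qed.

Lemma Spi_compact (Sg : formula S (I + N) -> Prop) :
  (forall l, (forall p, In p l -> Sg p) -> exists q : Spi S I pi N, forall p, In p l -> proj1_sig q p) ->
  exists q : Spi S I pi N, forall p, Sg p -> proj1_sig q p.
Proof.
  intro H. apply Spi_of_finsat. intros l Hl.
  set (lS := filter (fun p => decide (Sg p)) l).
  destruct (H lS) as [q Hq]; [intros p Hp; apply filter_In in Hp; apply decide_true, Hp|].
  apply (proj1 (proj1 (proj2_sig q))). intros p Hp.
  destruct (Hl p Hp) as [Sp|[r [Hr ->]]].
  - apply Hq, filter_In. rewrite decide_true; auto.
  - apply (proj2 (proj2_sig q)), Hr.
Qed.

Lemma automorphism_inverse s : automorphism S N s ->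
  exists t, automorphism S N t /\ (forall x, t (s x) = x) /\ (forall x, s (t x) = x).
Proof.
  intros Hs. pose proof Hs as [Hinj [Hsurj [Hf Hr]]].
  apply choice in Hsurj. destruct Hsurj as [t st].
  assert (ts : forall x, t (s x) = x) by (intro x; apply Hinj; rewrite st; auto).
  exists t; split; [|split; auto].
  split; [|split; [|split]].
  - intros x y E. rewrite <- (st x), <- (st y), E; auto.
  - intro y; exists (s y); auto.
  - intros f args. apply Hinj. rewrite st, Hf. f_equal; apply functional_extensionality; intro i; rewrite st; auto.
  - intros r args. rewrite (Hr r (fun i => t (args i))).
    replace (fun i => s (t (args i))) with args; [tauto|].
    apply functional_extensionality; intro i; rewrite st; auto.
Qed.

Lemma Spi_act s : automorphism S N s -> forall q : Spi S I pi N,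
  exists q' : Spi S I pi N, forall p, proj1_sig q (fmap S (pmap s) p) <-> proj1_sig q' p.
Proof.
  intros Hs [q [Hq Hpi]]. destruct (automorphism_inverse s Hs) as [t [Ht [ts st]]].
  assert (Hc : complete_type S I N (fun p => q (fmap S (pmap s) p)) /\
               forall r, pi r -> q (fmap S (pmap s) (fmap S inl r))).
  { split; [split|].
    - intros l Hl. destruct (proj1 Hq (map (fmap S (pmap s)) l)) as [a Ha].
      { intros p Hp. apply in_map_iff in Hp. destruct Hp as [x [<- Hx]]. auto. }
      exists (fun i => t (a i)). intros p Hp. specialize (Ha _ (in_map _ _ _ Hp)).
      rewrite sat_fmap, <- (sat_aut S N t) in Ha by exact Ht.
      replace (penv S N (fun i => t (a i))) with (fun v => t (penv S N a (pmap s v))); auto.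
      apply functional_extensionality; intros [i|m]; simpl; auto.
    - intro p. apply (proj2 Hq).
    - intros r Hr. rewrite fmap_comp. apply Hpi in Hr. exact Hr. }
  exists (exist (fun q' => complete_type S I N q' /\ forall r, pi r -> q' (fmap S inl r)) _ Hc).
  simpl. tauto.
Qed.

End TypeSpace.

Section PartialElementary.
Variable S : signature.

Definition elementary (A B : structure S) (L : list (A * B)) :=
  forall n (h : Fin.t n -> A * B) (th : formula S (Fin.t n)), (forall i, In (h i) L) ->
    (sat S A (fun i => fst (h i)) th <-> sat S B (fun i => snd (h i)) th).

Lemma elementary_swap A B L : elementary A B L -> elementary B A (map (fun x => (snd x, fst x)) L).
Proof.
  intros H n h th Hh. symmetry. apply (H n (fun i => (snd (h i), fst (h i)))).
  intro i. destruct (proj1 (in_map_iff _ _ _) (Hh i)) as [[x y] [E Hx]]. rewrite <- E; exact Hx.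
Qed.

Lemma elementary_nil A B : (forall s : sentence S, sat S A no_var s -> sat S B no_var s) ->
  elementary A B [].
Proof.
  intros HAB n h th Hh. destruct n as [|n]; [|destruct (Hh Fin.F1)].
  set (c := fun i : Fin.t 0 => Fin.case0 (fun _ => Empty_set) i).
  assert (E0 : forall (M : structure S) (e : Fin.t 0 -> M), e = fun i => no_var (c i)).
  { intros M e; apply functional_extensionality; intro i; apply (Fin.case0 (fun i => _ = _) i). }
  rewrite (E0 A (fun i => fst (h i))), (E0 B (fun i => snd (h i))).
  rewrite <- (sat_fmap S A _ _ c th no_var), <- (sat_fmap S B _ _ c th no_var). split; intro H.
  - apply HAB; auto.
  - apply NNPP; intro N. apply (HAB (FNot (fmap S c th))) in N. apply N; auto.
Qed.

Lemma elementary_functional A B L a b1 b2 : elementary A B L -> In (a, b1) L -> In (a, b2) L -> b1 = b2.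
Proof.
  intros H H1 H2.
  set (h := fun i : Fin.t 2 => Fin.caseS' i (fun _ => (A * B)%type) (a, b1) (fun _ => (a, b2))).
  apply (H 2%nat h (FEq (TVar Fin.F1) (TVar (Fin.FS Fin.F1)))); [|reflexivity].
  intro i. apply (Fin.caseS' i (fun i => In (h i) L)); simpl; auto.
Qed.

(* Forth step: the type of a over the finite domain of L, transported along L, is finitely
   satisfiable in B, hence realized there by aleph_0-saturation. *)
Lemma elementary_extend A B L : aleph0_saturated S B -> elementary A B L ->
  forall a : A, exists b, elementary A B ((a, b) :: L).
Proof.
  intros Sat HL a.
  destruct (Sat (length L) (fun i => snd (lnth L i)) (fun th => sat S A (ext (fun i => fst (lnth L i)) a) th))
    as [b Hb].
  { intros l Hl. assert (H : sat S A (fun i => fst (lnth L i)) (FEx (conjl S l))).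
    { exists a. apply sat_conjl. intros; apply Hl; auto. }
    apply (HL _ (lnth L)) in H; [|intro i; apply lnth_In].
    destruct H as [m Hm]. exists m. apply sat_conjl; auto. }
  exists b. intros n h th Hh.
  assert (Hrho : forall i, h i = (ext (fun j => fst (lnth L j)) a (lindex L (h i)),
                                  ext (fun j => snd (lnth L j)) b (lindex L (h i)))).
  { intro i. pose proof (lindex_spec L (h i)) as Hi.
    destruct (lindex L (h i)) as [j|]; simpl.
    - rewrite <- Hi. destruct (lnth L j); auto.
    - destruct (Hh i) as [E|E]; [rewrite <- E; auto|contradiction]. }
  set (rho := fun i => lindex L (h i)).
  replace (fun i => fst (h i)) with (fun i => ext (fun j => fst (lnth L j)) a (rho i))
    by (apply functional_extensionality; intro i; rewrite Hrho; auto).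
  replace (fun i => snd (h i)) with (fun i => ext (fun j => snd (lnth L j)) b (rho i))
    by (apply functional_extensionality; intro i; rewrite Hrho; auto).
  rewrite <- (sat_fmap S A _ _ rho th), <- (sat_fmap S B _ _ rho th). split; intro H.
  - apply Hb; auto.
  - apply NNPP; intro N. apply (Hb (FNot (fmap S rho th))) in N; auto.
Qed.

Lemma elementary_extend_back A B L : aleph0_saturated S A -> elementary A B L ->
  forall b : B, exists a, elementary A B ((a, b) :: L).
Proof.
  intros Sat HL b. destruct (elementary_extend B A _ Sat (elementary_swap A B L HL) b) as [a Ha].
  exists a. apply elementary_swap in Ha. simpl in Ha. rewrite map_map in Ha.
  replace (map (fun x => (snd (snd x, fst x), fst (snd x, fst x))) L) with L in Ha; auto.
  rewrite <- map_id at 1. apply map_ext. intros [x y]; reflexivity.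
Qed.

Lemma elementary_sat (A B : structure S) (L : list (A * B)) (d : A * B) V
  (eA : V -> A) (eB : V -> B) (p : formula S V) :
  elementary A B L -> In d L -> (forall v, In v (vars S p) -> In (eA v, eB v) L) ->
  (sat S A eA p <-> sat S B eB p).
Proof.
  intros HL Hd Hv. set (vs := vars S p).
  set (h := fun i : Fin.t (Datatypes.S (length vs)) =>
              Fin.caseS' i (fun _ => (A * B)%type) d (fun j => (eA (lnth vs j), eB (lnth vs j)))).
  set (rho := fun v => match lindex vs v with Some j => Fin.FS j | None => Fin.F1 end).
  assert (Hr : forall v, In v vs -> h (rho v) = (eA v, eB v)).
  { intros v Hvs; unfold rho. pose proof (lindex_spec vs v) as Hi.
    destruct (lindex vs v) as [j|]; [simpl; rewrite Hi; auto|contradiction]. }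
  rewrite (sat_vars S A V p eA (fun v => fst (h (rho v)))) by (intros v Hvs; rewrite Hr; auto).
  rewrite (sat_vars S B V p eB (fun v => snd (h (rho v)))) by (intros v Hvs; rewrite Hr; auto).
  rewrite <- (sat_fmap S A _ _ rho p (fun i => fst (h i))), <- (sat_fmap S B _ _ rho p (fun i => snd (h i))).
  apply HL. intro i. apply (Fin.caseS' i (fun i => In (h i) L)); simpl; auto.
  intro j. apply Hv, lnth_In.
Qed.

End PartialElementary.

Lemma set_ext {X : Type} (A B : X -> Prop) : (forall x, A x <-> B x) -> A = B.
Proof. intro H; apply functional_extensionality; intro x; apply propositional_extensionality; auto. Qed.

Section BorelProbability.
Variables (Sig : signature) (I : Type) (pi : formula Sig I -> Prop) (N : structure Sig).
Variable mu : (Spi Sig I pi N -> Prop) -> R.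
Hypothesis Hmu : regular_borel_prob Sig I pi N mu.

Lemma borel_open U : sopen Sig I pi N U -> borel Sig I pi N U.
Proof. intros H C HO HC HU; apply HO; auto. Qed.

Lemma borel_compl A : borel Sig I pi N A -> borel Sig I pi N (fun q => ~ A q).
Proof. intros H C HO HC HU; apply HC; apply H; auto. Qed.

Lemma borel_inter A B : borel Sig I pi N A -> borel Sig I pi N B -> borel Sig I pi N (fun q => A q /\ B q).
Proof.
  intros HA HB. set (F := fun n : nat => match n with O => fun q => ~ A q | _ => fun q => ~ B q end).
  replace (fun q => A q /\ B q) with (fun q => ~ exists n, F n q).
  - apply borel_compl. intros C HO HC HU. apply HU. intros [|n]; apply HC; [apply HA|apply HB]; auto.
  - apply set_ext; intro q; split.
    + intro H; split; apply NNPP; intro N'; apply H; [exists O|exists 1%nat]; auto.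
    + intros [Aq Bq] [[|n] Hn]; auto.
Qed.

Lemma mu_empty : mu (fun _ => False) = 0.
Proof.
  destruct Hmu as [_ [_ [Hadd _]]]. set (c := mu (fun _ => False)).
  assert (Hc : infinite_sum (fun _ => c) c).
  { assert (E : mu (fun q => exists n : nat, False) = c)
      by (unfold c; f_equal; apply set_ext; intro q; split; [intros [_ []]|intros []]).
    pose proof (Hadd (fun _ _ => False)) as H. cbv beta in H. rewrite E in H.
    apply H; [intros; apply borel_open; intros q []|tauto]. }
  apply NNPP; intro Hn. destruct (Hc (Rabs c)) as [K HK]; [apply Rabs_pos_lt; auto|].
  specialize (HK (S K) (le_S _ _ (le_n K))). unfold R_dist in HK. rewrite sum_cte in HK.
  replace (c * INR (S (S K)) - c) with (INR (S K) * c) in HK by (rewrite (S_INR (S K)); ring).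
  rewrite Rabs_mult, Rabs_right in HK by (apply Rle_ge, pos_INR).
  assert (1 <= INR (S K)) by (rewrite S_INR; pose proof (pos_INR K); lra).
  pose proof (Rabs_pos c). nra.
Qed.

Lemma mu_disjoint_union A B : borel Sig I pi N A -> borel Sig I pi N B ->
  (forall q, A q -> B q -> False) -> mu (fun q => A q \/ B q) = mu A + mu B.
Proof.
  intros HA HB HD. destruct Hmu as [_ [_ [Hadd _]]].
  set (F := fun n : nat => match n with O => A | 1%nat => B | _ => fun _ => False end).
  assert (HF : infinite_sum (fun n => mu (F n)) (mu (fun q => exists n, F n q))).
  { apply Hadd.
    - intros [|[|n]]; simpl; auto. apply borel_open; intros q [].
    - intros [|[|n]] [|[|m]] q Hnm; simpl; try tauto; intros; eauto. }
  replace (fun q => exists n, F n q) with (fun q => A q \/ B q) in HF.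
  2:{ apply set_ext; intro q; split; [intros [H|H]; [exists O|exists 1%nat]; auto|].
      intros [[|[|n]] H]; simpl in H; tauto. }
  apply (uniqueness_sum _ _ _ HF). intros eps He. exists 1%nat. intros n Hn.
  replace (sum_f_R0 (fun n => mu (F n)) n) with (mu A + mu B); [rewrite R_dist_eq; auto|].
  destruct n as [|n]; [lia|]. clear Hn. induction n; simpl in *; [auto|].
  rewrite <- IHn, mu_empty. ring.
Qed.

Lemma mu_mono A B : borel Sig I pi N A -> borel Sig I pi N B -> (forall q, A q -> B q) -> mu A <= mu B.
Proof.
  intros HA HB H. assert (HBA : borel Sig I pi N (fun q => B q /\ ~ A q))
    by (apply borel_inter; auto; apply borel_compl; auto).
  replace B with (fun q => A q \/ (B q /\ ~ A q)).
  - rewrite mu_disjoint_union by (auto; intros q H1 [_ H2]; auto).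
    pose proof (proj1 Hmu _ HBA). lra.
  - apply set_ext; intro q; split; [intros [Hq|[Hq _]]; auto|]. intro Hq; destruct (classic (A q)); auto.
Qed.

End BorelProbability.

Lemma fmap_pmap_inverse (Sig : signature) V (N : Type) (s t : N -> N) (p : formula Sig (V + N)) :
  (forall x, s (t x) = x) -> fmap Sig (pmap s) (fmap Sig (pmap t) p) = p.
Proof.
  intro st. rewrite fmap_comp. transitivity (fmap Sig (fun v => v) p); [|apply fmap_id].
  apply fmap_ext. intros [i|m]; simpl; rewrite ?st; auto.
Qed.

Section Transport.
Variables (Sig : signature) (T : sentence Sig -> Prop) (I : Type) (pi : formula Sig I -> Prop)
  (M M' : structure Sig).
Hypothesis HT : complete_theory Sig T.
Hypothesis HMT : models Sig M T.
Hypothesis HM'T : models Sig M' T.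
Hypothesis satM : aleph0_saturated Sig M.
Hypothesis satM' : aleph0_saturated Sig M'.
Hypothesis homM : strongly_aleph0_homogeneous Sig M.
Variable mu : (Spi Sig I pi M -> Prop) -> R.
Hypothesis Hmu : regular_borel_prob Sig I pi M mu.
Hypothesis Hinv : aut_invariant Sig I pi M mu.

Lemma sentence_transfer (s : sentence Sig) : sat Sig M' no_var s -> sat Sig M no_var s.
Proof. intro H. destruct (proj2 HT s) as [H1|H1]; [apply H1; auto|destruct (H1 M' HM'T H)]. Qed.

(* Nonemptiness provides the default pair required by elementary_sat. *)
Definition pelem (L : list (M' * M)) := elementary Sig M' M L /\ L <> [].

(* Junk off the domain of L; [covers L p] guarantees it is never used on the parameters of p. *)
Definition fwd (L : list (M' * M)) (x : M') : M := epsilon (carrier_inh Sig M) (fun b => In (x, b) L).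

Definition bwd (L : list (M' * M)) (y : M) : M' := epsilon (carrier_inh Sig M') (fun a => In (a, y) L).

Definition relabel (g : M' -> M) (v : I + M') : I + M :=
  match v with inl i => inl i | inr m => inr (g m) end.

Definition transport (L : list (M' * M)) (p : formula Sig (I + M')) : formula Sig (I + M) :=
  fmap Sig (relabel (fwd L)) p.

Definition covers (L : list (M' * M)) (p : formula Sig (I + M')) :=
  forall m, In (inr m) (vars Sig p) -> exists b, In (m, b) L.

Lemma fwd_spec L x : (exists b, In (x, b) L) -> In (x, fwd L x) L.
Proof. exact (epsilon_spec (carrier_inh Sig M) (fun b => In (x, b) L)). Qed.

Lemma bwd_spec L y : (exists a, In (a, y) L) -> In (bwd L y, y) L.
Proof. exact (epsilon_spec (carrier_inh Sig M') (fun a => In (a, y) L)). Qed.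

Lemma pelem_witness L : pelem L -> exists d, In d L.
Proof. intros [_ H]; destruct L as [|d L]; [contradiction|exists d; left; auto]. Qed.

Lemma pelem_extend L ms : pelem L ->
  exists L', pelem L' /\ incl L L' /\ forall m, In m ms -> exists b, In (m, b) L'.
Proof.
  intro HL; induction ms as [|m ms IH]; [exists L; split; auto; split; [apply incl_refl|intros m []]|].
  destruct IH as [L1 [[G1 N1] [I1 C1]]].
  destruct (elementary_extend Sig M' M L1 satM G1 m) as [b Hb].
  exists ((m, b) :: L1). split; [split; [auto|discriminate]|split; [intros x Hx; right; auto|]].
  intros x [<-|Hx]; [exists b; left; auto|]. destruct (C1 x Hx) as [b' Hb']; exists b'; right; auto.
Qed.

Lemma pelem_extend_back L bs : pelem L ->
  exists L', pelem L' /\ incl L L' /\ forall b, In b bs -> exists a, In (a, b) L'.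
Proof.
  intro HL; induction bs as [|b bs IH]; [exists L; split; auto; split; [apply incl_refl|intros m []]|].
  destruct IH as [L1 [[G1 N1] [I1 C1]]].
  destruct (elementary_extend_back Sig M' M L1 satM' G1 b) as [a Ha].
  exists ((a, b) :: L1). split; [split; [auto|discriminate]|split; [intros x Hx; right; auto|]].
  intros x [<-|Hx]; [exists a; left; auto|]. destruct (C1 x Hx) as [a' Ha']; exists a'; right; auto.
Qed.

Lemma pelem_aut s L : automorphism Sig M' s -> pelem L -> pelem (map (fun x => (s (fst x), snd x)) L).
Proof.
  intros Hs [HL HnL]. split; [|destruct L; [contradiction|discriminate]].
  intros n h th Hh.
  destruct (choice (fun i x => In x L /\ h i = (s (fst x), snd x))) as [h0 H0].
  { intro i. destruct (proj1 (in_map_iff _ _ _) (Hh i)) as [x [E Hx]]. exists x; auto. }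
  replace (fun i => fst (h i)) with (fun i => s (fst (h0 i)))
    by (apply functional_extensionality; intro i; rewrite (proj2 (H0 i)); auto).
  replace (fun i => snd (h i)) with (fun i => snd (h0 i))
    by (apply functional_extensionality; intro i; rewrite (proj2 (H0 i)); auto).
  rewrite (sat_aut Sig M' s _ th (fun i => fst (h0 i)) Hs). apply HL. intro i; apply H0.
Qed.

Definition ivars (l : list (formula Sig (I + M'))) : list I :=
  flat_map (fun p => flat_map (fun v => match v with inl i => [i] | inr _ => [] end) (vars Sig p)) l.

Lemma ivars_spec l p i : In p l -> In (inl i) (vars Sig p) -> In i (ivars l).
Proof.
  intros Hp Hi. apply in_flat_map. exists p; split; auto. apply in_flat_map. exists (inl i); simpl; auto.
Qed.

Lemma finsat_from_transport L l : pelem L -> (forall p, In p l -> covers L p) ->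
  (exists a : I -> M, forall p, In p l -> sat Sig M (penv Sig M a) (transport L p)) ->
  exists a' : I -> M', forall p, In p l -> sat Sig M' (penv Sig M' a') p.
Proof.
  intros HL Hc [a Ha]. destruct (pelem_extend_back L (map a (ivars l)) HL) as [L' [[G' _] [I' C']]].
  destruct (pelem_witness L HL) as [d Hd].
  exists (fun i => bwd L' (a i)). intros p Hp. specialize (Ha p Hp). unfold transport in Ha.
  rewrite sat_fmap in Ha.
  apply (elementary_sat Sig M' M L' d (I + M') _ (fun v => penv Sig M a (relabel (fwd L) v)) p); auto.
  intros [i|m] Hv; simpl.
  - apply bwd_spec, C', in_map, (ivars_spec l p); auto.
  - apply I', fwd_spec, (Hc p Hp); auto.
Qed.

Definition params (p : formula Sig (I + M')) : list M' :=
  flat_map (fun v => match v with inr m => [m] | inl _ => [] end) (vars Sig p).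

Lemma params_spec p m : In m (params p) <-> In (inr m) (vars Sig p).
Proof.
  unfold params; rewrite in_flat_map. split.
  - intros [[i|x] [Hx Hm]]; simpl in Hm; [destruct Hm|]. destruct Hm as [<-|[]]; auto.
  - intro H; exists (inr m); simpl; auto.
Qed.

Lemma pelem_covering p : exists L, pelem L /\ covers L p.
Proof.
  destruct (carrier_inh Sig M') as [m'].
  destruct (elementary_extend Sig M' M [] satM (elementary_nil Sig M' M sentence_transfer) m') as [b Hb].
  destruct (pelem_extend [(m', b)] (params p)) as [L [HL [_ HC]]]; [split; [auto|discriminate]|].
  exists L; split; auto. intros m Hm; apply HC, params_spec; auto.
Qed.

Definition pelem_for (p : formula Sig (I + M')) : list (M' * M) :=
  epsilon (inhabits []) (fun L => pelem L /\ covers L p).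

Lemma pelem_for_spec p : pelem (pelem_for p) /\ covers (pelem_for p) p.
Proof. exact (epsilon_spec (inhabits []) (fun L => pelem L /\ covers L p) (pelem_covering p)). Qed.

Definition clopen (r : formula Sig (I + M)) : Spi Sig I pi M -> Prop := fun q => proj1_sig q r.

Lemma clopen_borel r : borel Sig I pi M (clopen r).
Proof. apply borel_open. intros q H; exists r; split; auto. Qed.

Lemma clopen_ext r1 r2 : (forall a, sat Sig M (penv Sig M a) r1 <-> sat Sig M (penv Sig M a) r2) ->
  clopen r1 = clopen r2.
Proof.
  intro H. apply set_ext; intro q. pose proof (proj1 (proj2_sig q)) as Hq; unfold clopen.
  split; apply complete_type_imp; auto; intros a; apply H.
Qed.

Lemma mu_clopen_aut t r : automorphism Sig M t -> mu (clopen (fmap Sig (pmap t) r)) = mu (clopen r).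
Proof.
  intro Ht. destruct (automorphism_inverse Sig M t Ht) as [s [Hs [st ts]]].
  rewrite <- (Hinv s Hs (clopen r) (clopen_borel r)). f_equal. apply set_ext; intro q. split.
  - intro Hq. destruct (Spi_act Sig I pi M t Ht q) as [q' Hq']. exists q'. split.
    + apply Hq', Hq.
    + intro φ. rewrite <- Hq', fmap_pmap_inverse by exact ts. tauto.
  - intros [q' [Hq' R]]. apply R. rewrite fmap_pmap_inverse by exact st. exact Hq'.
Qed.

(* Two partial elementary maps covering the parameters of p send them to tuples with the same
   type over the empty set; strong homogeneity of M and invariance of mu do the rest. *)
Lemma mu_transport_indep L1 L2 p : pelem L1 -> covers L1 p -> pelem L2 -> covers L2 p ->
  mu (clopen (transport L1 p)) = mu (clopen (transport L2 p)).
Proof.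
  intros HL1 Hc1 HL2 Hc2. set (ps := params p).
  assert (Hin : forall L, covers L p -> forall i, In (lnth ps i, fwd L (lnth ps i)) L).
  { intros L Hc i. apply fwd_spec, Hc, params_spec, lnth_In. }
  assert (Htp : forall th, sat Sig M (fun i => fwd L1 (lnth ps i)) th <->
                           sat Sig M (fun i => fwd L2 (lnth ps i)) th).
  { intro th. destruct (pelem_witness L1 HL1) as [d1 Hd1], (pelem_witness L2 HL2) as [d2 Hd2].
    transitivity (sat Sig M' (lnth ps) th).
    - symmetry. apply (elementary_sat Sig M' M L1 d1); [apply HL1|auto|intros; apply Hin; auto].
    - apply (elementary_sat Sig M' M L2 d2); [apply HL2|auto|intros; apply Hin; auto]. }
  destruct (homM _ _ _ Htp) as [s [Hs Hs12]].
  rewrite <- (mu_clopen_aut s (transport L1 p) Hs). f_equal.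
  apply clopen_ext. intro e. unfold transport. rewrite fmap_comp. apply sat_fmap_vars.
  intros [i|m] Hv; simpl; auto. f_equal.
  destruct (lnth_surj ps m) as [j <-]; [apply params_spec; auto|]. apply Hs12.
Qed.

Definition val (p : formula Sig (I + M')) : R := mu (clopen (transport (pelem_for p) p)).

Lemma val_transport L p : pelem L -> covers L p -> val p = mu (clopen (transport L p)).
Proof. intros HL Hc. apply mu_transport_indep; auto; apply pelem_for_spec. Qed.

Lemma transport_inl L r : transport L (fmap Sig inl r) = fmap Sig inl r.
Proof. unfold transport. rewrite fmap_comp. reflexivity. Qed.

Lemma covers_inl L r : covers L (fmap Sig inl r).
Proof. intros m Hm. apply vars_fmap in Hm. destruct Hm as [w [_ E]]. discriminate. Qed.

Lemma covers_and L p r : covers L (FAnd p r) -> covers L p /\ covers L r.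
Proof. intro Hc; split; intros m Hm; apply Hc; simpl; apply in_or_app; auto. Qed.

(* A type over M containing the transports of p and of not-r pulls back, through saturation of M',
   to a type over M' containing p and not-r. *)
Lemma val_mono p r : (forall q : Spi Sig I pi M', proj1_sig q p -> proj1_sig q r) -> val p <= val r.
Proof.
  intro H. destruct (pelem_covering (FAnd p r)) as [L [HL [Hcp Hcr]%covers_and]].
  rewrite (val_transport L p HL Hcp), (val_transport L r HL Hcr).
  apply (mu_mono Sig I pi M mu Hmu); [apply clopen_borel|apply clopen_borel|].
  intros q Hq. apply NNPP; intro Hn.
  destruct (Spi_of_finsat Sig I pi M' (fun x => x = p \/ x = FNot r)) as [q' Hq'].
  - intros l Hl. apply (finsat_from_transport L l HL).
    + intros x Hx. destruct (Hl x Hx) as [[->| ->]|[r0 [_ ->]]]; auto. apply covers_inl.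
    + destruct (proj1 (proj1 (proj2_sig q)) (map (transport L) l)) as [a Ha].
      * intros y Hy. apply in_map_iff in Hy. destruct Hy as [x [<- Hx]].
        destruct (Hl x Hx) as [[->| ->]|[r0 [Hr0 ->]]]; [exact Hq|apply Spi_neg, Hn|].
        rewrite transport_inl. apply (proj2 (proj2_sig q)); auto.
      * exists a. intros x Hx. apply Ha, in_map; auto.
  - apply (Spi_neg Sig I pi M' q' r); [apply Hq'|apply H, Hq']; auto.
Qed.

Lemma val_split p r : val p = val (FAnd p r) + val (FAnd p (FNot r)).
Proof.
  destruct (pelem_covering (FAnd p r)) as [L [HL Hc]].
  pose proof (proj1 (covers_and L p r Hc)) as Hcp.
  rewrite (val_transport L p HL Hcp), (val_transport L (FAnd p r) HL Hc),
    (val_transport L (FAnd p (FNot r)) HL Hc).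
  rewrite <- (mu_disjoint_union Sig I pi M mu Hmu); [|apply clopen_borel|apply clopen_borel|].
  - f_equal. apply set_ext; intro q. unfold clopen, transport; simpl.
    rewrite !Spi_and, Spi_neg. tauto.
  - intros q. unfold clopen, transport; simpl. rewrite !Spi_and, Spi_neg. tauto.
Qed.

Lemma val_full : val ftrue = 1.
Proof.
  unfold val. rewrite <- (proj1 (proj2 Hmu)). f_equal.
  apply set_ext; intro q; split; auto. intros _. apply Spi_ftrue.
Qed.

Lemma val_ge0 p : 0 <= val p.
Proof. apply (proj1 Hmu), clopen_borel. Qed.

Lemma val_aut s p : automorphism Sig M' s -> val (fmap Sig (pmap s) p) = val p.
Proof.
  intro Hs. destruct (pelem_for_spec p) as [HL Hc]. revert HL Hc. unfold val at 2.
  generalize (pelem_for p). intros L HL Hc.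
  set (Ls := map (fun x => (s (fst x), snd x)) L).
  assert (Hcs : covers Ls (fmap Sig (pmap s) p)).
  { intros m Hm. apply vars_fmap in Hm. destruct Hm as [[i|x] [Hx E]]; [discriminate|].
    injection E as ->. destruct (Hc x Hx) as [b Hb]. exists b.
    apply (in_map (fun x => (s (fst x), snd x)) L (x, b) Hb). }
  rewrite (val_transport Ls _ (pelem_aut s L Hs HL) Hcs). f_equal. apply clopen_ext. intro e.
  unfold transport. rewrite fmap_comp. apply sat_fmap_vars.
  intros [i|x] Hv; simpl; auto. f_equal.
  assert (H1 : In (s x, fwd Ls (s x)) Ls).
  { apply fwd_spec. destruct (Hc x Hv) as [b Hb]. exists b.
    apply (in_map (fun x => (s (fst x), snd x)) L (x, b) Hb). }
  apply in_map_iff in H1. destruct H1 as [[x' b'] [E Hin]]. injection E as E1 E2.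
  apply (proj1 Hs) in E1. subst x'.
  apply (elementary_functional Sig M' M L x); [apply HL|rewrite <- E2; exact Hin|apply fwd_spec, Hc, Hv].
Qed.

Definition transported_measure : (Spi Sig I pi M' -> Prop) -> R :=
  outer (Spi Sig I pi M') (formula Sig (I + M')) (fun q p => proj1_sig q p) val.

Lemma transported_measure_regular : regular_borel_prob Sig I pi M' transported_measure.
Proof.
  exact (outer_regular_borel_prob _ _ _ FNot FAnd ftrue (Spi_neg Sig I pi M') (Spi_and Sig I pi M')
    (Spi_ftrue Sig I pi M') (Spi_compact Sig I pi M') val val_ge0 val_full val_mono val_split).
Qed.

Lemma transported_measure_invariant : aut_invariant Sig I pi M' transported_measure.
Proof.
  intros s Hs B _. destruct (automorphism_inverse Sig M' s Hs) as [t [Ht [ts st]]].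
  apply (outer_img _ _ _ FNot ftrue (Spi_neg Sig I pi M') (Spi_ftrue Sig I pi M')
    val val_ge0 val_full val_mono (Spi_ext Sig I pi M') (fmap Sig (pmap s)) (fmap Sig (pmap t))).
  - intro p; apply val_aut, Hs.
  - intro p; apply val_aut, Ht.
  - intros q p. rewrite fmap_pmap_inverse by exact st. tauto.
  - intros q p. rewrite fmap_pmap_inverse by exact ts. tauto.
  - apply Spi_act, Hs.
  - apply Spi_act, Ht.
Qed.

End Transport.

Theorem proposition3p3 (S : signature) (T : sentence S -> Prop) (I : Type)
  (pi : formula S I -> Prop) (M M' : structure S) :
  complete_theory S T -> partial_type S T I pi ->
  models S M T -> aleph0_saturated S M -> strongly_aleph0_homogeneous S M ->
  models S M' T -> aleph0_saturated S M' -> strongly_aleph0_homogeneous S M' ->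
  (exists mu : (Spi S I pi M -> Prop) -> R,
      regular_borel_prob S I pi M mu /\ aut_invariant S I pi M mu) ->
  exists mu' : (Spi S I pi M' -> Prop) -> R,
      regular_borel_prob S I pi M' mu' /\ aut_invariant S I pi M' mu'.
Proof.
  intros HT _ HMT satM homM HM'T satM' _ [mu [Hmu Hinv]].
  exists (transported_measure S I pi M M' mu).
  split; [eapply transported_measure_regular|eapply transported_measure_invariant]; eauto.
Qed.
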